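(* Let $\lambda>0$ and let $\mu,m,g,\varkappa,\sigma_t$ be as described below. Then $$\lim_{t\to\infty}\sigma_t\,t\,g''(\lambda\sigma_t)=-\varkappa\lambda^{-2}\qquad\text{and}\qquad\lim_{t\to\infty}\sigma_t\,g'(\lambda\sigma_t)=0.$$
   Context: $\mu$ is a probability distribution on $(0,1)$, and $m(x)=-\log\mu((x,1))$ for $x\in[0,1)$ is twice differentiable on $[0,1)$ with $m'>0$ and $m''>0$ there, $\lim_{x\uparrow1}m''(x)/(m'(x))^2=0$, $\lim_{x\uparrow1}m''(x)m(x)x/(m'(x))^2=\varkappa$ for some $\varkappa>0$, and $\lim_{x\uparrow1}m(x)/m'(x)=0$. $g=m^{-1}:[0,\infty)\to[0,1)$. For all sufficiently large $t$, $\sigma_t$ denotes the unique solution $x\in[0,t)$ of $(\log g)'(\lambda x)=\frac1{\lambda(t-x)}$. *)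

From HB Require Import structures.
From mathcomp Require Import all_boot all_order all_algebra.
From mathcomp Require Import all_classical all_reals all_analysis.
Set Implicit Arguments. Unset Strict Implicit. Unset Printing Implicit Defensive.
Import Order.TTheory GRing.Theory Num.Theory.
Import numFieldNormedType.Exports.
Local Open Scope classical_set_scope.
Local Open Scope ring_scope.

Definition mlogtail (R : realType) (mu : probability R R) (x : R) : R :=
  - ln (fine (mu `]x, 1[%classic)).

(* x solves (log g)'(lam x) = 1/(lam (t - x)); log g must be defined at lam x,
   i.e. g (lam x) > 0, and differentiable there. *)
Definition sigma_eq (R : realType) (g : R -> R) (lam t x : R) : Prop :=
  0 < g (lam * x) /\
  derivable (fun y => ln (g y)) (lam * x) 1 /\
  derive1 (fun y => ln (g y)) (lam * x) = (lam * (t - x))^-1.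

From HB Require Import structures.
From mathcomp Require Import all_boot all_order all_algebra.
From mathcomp Require Import all_classical all_reals all_analysis.
From mathcomp Require Import ring lra.
Import Order.TTheory GRing.Theory Num.Theory.
Import numFieldNormedType.Exports.
Local Open Scope classical_set_scope.
Local Open Scope ring_scope.

(* Write x_t := g (lam sigma_t), so that lam sigma_t = m x_t. Since
   g' = 1 / (m' o g) and g'' = - m'' / m'^3 o g, the equation defining sigma_t
   reads x_t m'(x_t) = lam (t - sigma_t), i.e. lam t = m x_t + x_t m'(x_t).
   As m and m' increase on (0,1), this forces x_t --> 1^- when t --> +oo.
   Both quantities are then explicit functions of x_t:
     sigma_t g'(lam sigma_t) = B(x_t) / lam,
     sigma_t t g''(lam sigma_t) = - (A(x_t) B(x_t) / x_t + A(x_t)) / lam^2,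
   with A := m'' m x / m'^2 --> kappa and B := m / m' --> 0 at 1^-. *)

Lemma is_derive_ge0_ndecr {R : realType} {f df : R -> R} {a b : R} :
  (forall x, a < x < b -> is_derive x 1 f (df x)) ->
  (forall x, a < x < b -> 0 <= df x) ->
  forall x y, a < x -> x <= y -> y < b -> f x <= f y.
Proof.
move=> fdf df_ge0 x y ax xy yb.
have xy_ab z : x <= z -> z <= y -> a < z < b.
  by move=> xz zy; rewrite (lt_le_trans ax xz) (le_lt_trans zy yb).
apply: (@ger0_derive1_ndecr R f x y) => //.
- move=> z; rewrite in_itv/= => /andP[/ltW xz /ltW zy].
  by have [] := fdf z (xy_ab z xz zy).
- move=> z; rewrite in_itv/= => /andP[/ltW xz /ltW zy].
  rewrite derive1E; have [_ ->] := fdf z (xy_ab z xz zy).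
  by rewrite df_ge0 ?xy_ab.
- apply: continuous_in_subspaceT => z; rewrite inE/= in_itv/= => /andP[xz zy].
  have [fz _] := fdf z (xy_ab z xz zy).
  exact/differentiable_continuous/derivable1_diffP.
Qed.

Lemma cvg_at_left_of_bounds (R : realFieldType) (T : Type) (F : set_system T)
    {FF : Filter F} (X : T -> R) (a : R) :
  (forall c, c < a -> \forall t \near F, c < X t < a) -> X @ F --> a^'-.
Proof.
move=> Xa P /nbhs_ballP[e /= e0 aeP].
apply: filterS (Xa (a - e) _); last by rewrite gtrBl.
move=> t /andP[aeX Xa']; apply: aeP => //.
rewrite /ball /= ger0_norm ?subr_ge0 ?(ltW Xa'); lra.
Qed.

Section inverse_of_increasing_convex.
Context {R : realType} {m m1 m2 g : R -> R}.
Hypothesis m_deriv : forall {x : R}, 0 < x < 1 -> is_derive x 1 m (m1 x).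
Hypothesis m1_deriv : forall {x : R}, 0 < x < 1 -> is_derive x 1 m1 (m2 x).
Hypothesis m1_gt0 : forall {x : R}, 0 < x < 1 -> 0 < m1 x.
Hypothesis m2_gt0 : forall {x : R}, 0 < x < 1 -> 0 < m2 x.
Hypothesis m0 : m 0 = 0.
Hypothesis g_itv : forall {y : R}, 0 <= y -> 0 <= g y < 1.
Hypothesis gK : forall {y : R}, 0 <= y -> m (g y) = y.
Hypothesis mK : forall {x : R}, 0 <= x < 1 -> g (m x) = x.

Lemma g_in_itvoo {y : R} : 0 < y -> 0 < g y < 1.
Proof.
move=> y0; have y_ge0 := ltW y0; have /andP[g0 ->] := g_itv y_ge0.
rewrite andbT lt_neqAle g0 andbT; apply: contraTneq y0 => gy0.
by rewrite -(gK y_ge0) -gy0 m0 ltxx.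
Qed.

Lemma is_derive_g {y : R} : 0 < y -> is_derive y 1 g (m1 (g y))^-1.
Proof.
move=> y0; have gy01 := g_in_itvoo y0.
have near01 : \forall x \near g y, 0 < x < 1.
  have : g y \in `]0, 1[ by rewrite in_itv.
  by move/near_in_itvoo; apply: filterS => x; rewrite in_itv.
rewrite -{1}(gK (ltW y0)); apply: is_derive_inverse.
- by apply: filterS near01 => x /andP[x0 x1]; rewrite mK ?ltW ?x0.
- apply: filterS near01 => x x01; have [mx _] := m_deriv x01.
  exact/differentiable_continuous/derivable1_diffP.
- exact: m_deriv.
- by rewrite gt_eqF ?m1_gt0.
Qed.

Lemma is_derive2_g {y : R} : 0 < y ->
  is_derive y 1 (derive1 g) (- m2 (g y) / m1 (g y) ^+ 3).
Proof.
move=> y0; have gy01 := g_in_itvoo y0.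
have m1g_neq0 : m1 (g y) != 0 by rewrite gt_eqF ?m1_gt0.
have g'E : \forall z \near y, (m1 (g z))^-1 = derive1 g z.
  have : y \in `]0, +oo[ by rewrite in_itv/= y0.
  move/near_in_itvoy; apply: filterS => z; rewrite in_itv/= andbT => z0.
  by have [_ <-] := is_derive_g z0; rewrite derive1E.
apply: near_eq_is_derive g'E _.
have m1g' := is_derive1_comp (m1_deriv gy01) (is_derive_g y0).
apply: is_derive_eq (is_deriveV m1g_neq0 m1g') _.
by rewrite /GRing.scale /=; field.
Qed.

Lemma sigma_eq_balance {lam t s : R} : 0 < lam -> 0 <= s -> sigma_eq g lam t s ->
  0 < s /\ g (lam * s) * m1 (g (lam * s)) = lam * (t - s).
Proof.
move=> lam0 s0 [g_pos [_ dlng]].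
have s_gt0 : 0 < s.
  rewrite lt_neqAle s0 andbT; apply: contraTneq g_pos => <-.
  by rewrite mulr0 -{2}m0 mK ?ltxx // lexx ltr01.
split=> //; have y0 : 0 < lam * s by rewrite mulr_gt0.
have /andP[x0 _] := g_in_itvoo y0.
have [_ dlng_val] := is_derive1_comp (is_derive1_ln x0) (is_derive_g y0).
by move: dlng; rewrite derive1E dlng_val -invfM => /invr_inj.
Qed.

Lemma sigma_terms {lam t s : R} : 0 < lam -> 0 <= s -> sigma_eq g lam t s ->
  let x := g (lam * s) in
  [/\ 0 < x < 1, m x + x * m1 x = lam * t,
      s * t * derive1 (derive1 g) (lam * s)
        = m x / lam * ((m x + x * m1 x) / lam) * (- m2 x / m1 x ^+ 3)
    & s * derive1 g (lam * s) = m x / m1 x / lam].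
Proof.
move=> lam0 s0 sigma_s x.
have [s_gt0 balance] := sigma_eq_balance lam0 s0 sigma_s.
have y0 : 0 < lam * s by rewrite mulr_gt0.
have mx : m x = lam * s by rewrite gK ?ltW.
have lam_neq0 : lam != 0 by rewrite gt_eqF.
have m1x_neq0 : m1 x != 0 by rewrite gt_eqF ?m1_gt0 ?g_in_itvoo.
have mt : m x + x * m1 x = lam * t by rewrite balance mx; ring.
split; rewrite ?g_in_itvoo //.
- rewrite derive1E; have [_ ->] := is_derive2_g y0; rewrite -/x mt mx.
  by field; rewrite m1x_neq0 lam_neq0.
- rewrite derive1E; have [_ ->] := is_derive_g y0; rewrite -/x mx.
  by field; rewrite m1x_neq0 lam_neq0.
Qed.

Lemma cvg_left1_of_balance (T : Type) (F : set_system T) {FF : Filter F}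
    (X : T -> R) :
  (\forall t \near F, 0 < X t < 1) ->
  (fun t => m (X t) + X t * m1 (X t)) @ F --> +oo ->
  X @ F --> 1^'-.
Proof.
move=> X01 /cvgryPgt Xoo; apply: cvg_at_left_of_bounds => c c1.
pose d := Num.max c 2^-1.
have d0 : 0 < d by rewrite lt_max invr_gt0 ltr0n orbT.
have d1 : d < 1 by rewrite gt_max c1 invf_lt1 ?ltr1n.
near=> t.
have /andP[X0 X1] : 0 < X t < 1 by near: t.
have big : m d + m1 d < m (X t) + X t * m1 (X t) by near: t; exact: Xoo.
rewrite X1 andbT; apply: (@le_lt_trans _ _ d); first by rewrite le_max lexx.
rewrite ltNge; apply: contraTN big => Xd; rewrite -leNgt.
have m_le := is_derive_ge0_ndecr (@m_deriv) (fun x x01 => ltW (m1_gt0 x01))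
  _ _ X0 Xd d1.
have m1_le := is_derive_ge0_ndecr (@m1_deriv) (fun x x01 => ltW (m2_gt0 x01))
  _ _ X0 Xd d1.
have : X t * m1 (X t) <= m1 (X t).
  by rewrite ler_piMl ?(ltW X1) ?ltW ?m1_gt0 ?X0.
lra.
Unshelve. all: by end_near. Qed.

Lemma cvg_sigma_second_term {lam kappa : R} : lam != 0 ->
  (fun x => m2 x * m x * x / m1 x ^+ 2) @ 1^'- --> kappa ->
  (fun x => m x / m1 x) @ 1^'- --> 0 ->
  (fun x => m x / lam * ((m x + x * m1 x) / lam) * (- m2 x / m1 x ^+ 3))
    @ 1^'- --> - kappa / lam ^+ 2.
Proof.
move=> lam_neq0 A_cvg B_cvg.
pose A x := m2 x * m x * x / m1 x ^+ 2.
pose B x := m x / m1 x.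
have near01 : \forall x \near (1 : R)^'-, 0 < x < 1.
  near=> x; apply/andP; split; first by near: x; exact: nbhs_left_gt.
  by near: x; exact: nbhs_left_lt.
apply: (@cvg_trans _ ((fun x => - (A x * B x / x + A x) / lam ^+ 2) @ 1^'-)).
  apply: near_eq_cvg; apply: filterS near01 => x x01.
  have m1x_neq0 : m1 x != 0 by rewrite gt_eqF ?m1_gt0.
  have /andP[x0 _] := x01.
  by rewrite /A /B; field; rewrite lam_neq0 m1x_neq0 gt_eqF.
have -> : - kappa / lam ^+ 2 = - (kappa * 0 / 1 + kappa) / lam ^+ 2.
  by rewrite mulr0 mul0r add0r.
apply: cvgMr_tmp; apply: cvgN; apply: cvgD => //; apply: cvgM; first exact: cvgM.
by apply: cvgV; [exact: oner_neq0 | exact/cvg_at_left_filter/cvg_id].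
Unshelve. all: by end_near. Qed.

Lemma sigma_limits {kappa lam : R} {sigma : R -> R} :
  (fun x => m2 x * m x * x / m1 x ^+ 2) @ 1^'- --> kappa ->
  (fun x => m x / m1 x) @ 1^'- --> 0 ->
  0 < lam ->
  (\forall t \near +oo, 0 <= sigma t /\ sigma_eq g lam t (sigma t)) ->
  (fun t => sigma t * t * derive1 (derive1 g) (lam * sigma t))
     @ +oo --> - kappa / lam ^+ 2
  /\ (fun t => sigma t * derive1 g (lam * sigma t)) @ +oo --> 0.
Proof.
move=> A_cvg B_cvg lam0.
move/(filterS (fun t st => sigma_terms lam0 (proj1 st) (proj2 st))) => terms.
have X_cvg : (fun t => g (lam * sigma t)) @ +oo --> 1^'-.
  apply: cvg_left1_of_balance; first by apply: filterS terms => t [].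
  apply/cvgryPgt => A.
  have A_lt : \forall t \near +oo, A < lam * t.
    near=> t; rewrite -ltr_pdivrMl //; near: t.
    by apply: nbhs_pinfty_gt; rewrite num_real.
  by apply: filterS2 terms A_lt => t [_ ->].
have F_cvg := cvg_sigma_second_term (lt0r_neq0 lam0) A_cvg B_cvg.
have G_cvg : (fun x => m x / m1 x / lam) @ 1^'- --> 0.
  by rewrite -(mul0r lam^-1); exact: cvgMr_tmp.
split.
- apply: cvg_trans (cvg_comp _ _ X_cvg F_cvg).
  by apply: near_eq_cvg; apply: filterS terms => t [].
- apply: cvg_trans (cvg_comp _ _ X_cvg G_cvg).
  by apply: near_eq_cvg; apply: filterS terms => t [].
Unshelve. all: by end_near. Qed.

End inverse_of_increasing_convex.

Theorem lemma9 (R : realType) (mu : probability R R)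
  (m1 m2 : R -> R) (kappa lam : R) (g sigma : R -> R) :
  (* mu is a probability distribution on (0,1) *)
  mu `]0, 1[%classic = 1%E ->
  (* m is twice differentiable on [0,1), with derivatives m1, m2 *)
  (forall x : R, 0 < x < 1 -> is_derive x 1 (mlogtail mu) (m1 x)) ->
  (forall x : R, 0 < x < 1 -> is_derive x 1 m1 (m2 x)) ->
  (fun h : R => h^-1 * (mlogtail mu h - mlogtail mu 0)) @ 0^'+ --> m1 0 ->
  (fun h : R => h^-1 * (m1 h - m1 0)) @ 0^'+ --> m2 0 ->
  (forall x : R, 0 <= x < 1 -> 0 < m1 x) ->
  (forall x : R, 0 <= x < 1 -> 0 < m2 x) ->
  (fun x : R => m2 x / (m1 x) ^+ 2) @ 1^'- --> 0 ->
  0 < kappa ->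
  (fun x : R => m2 x * mlogtail mu x * x / (m1 x) ^+ 2) @ 1^'- --> kappa ->
  (fun x : R => mlogtail mu x / m1 x) @ 1^'- --> 0 ->
  (* g = m^{-1} : [0, oo) -> [0, 1) *)
  (forall y : R, 0 <= y -> 0 <= g y < 1 /\ mlogtail mu (g y) = y) ->
  (forall x : R, 0 <= x < 1 -> g (mlogtail mu x) = x) ->
  0 < lam ->
  (* for large t, sigma t is the unique solution in [0,t) *)
  (\forall t \near +oo,
     [/\ 0 <= sigma t < t, sigma_eq g lam t (sigma t) &
         forall x : R, 0 <= x < t -> sigma_eq g lam t x -> x = sigma t]) ->
  (fun t : R => sigma t * t * derive1 (derive1 g) (lam * sigma t))
     @ +oo --> - kappa / lam ^+ 2
  /\ (fun t : R => sigma t * derive1 g (lam * sigma t)) @ +oo --> 0.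
Proof.
move=> mu01 m_deriv m1_deriv _ _ m1_gt0 m2_gt0 _ _ A_cvg B_cvg g_inv m_inv lam0.
move=> sigma_def.
have m0 : mlogtail mu 0 = 0 by rewrite /mlogtail mu01 /= ln1 oppr0.
have open01 x : 0 < x < 1 -> 0 <= x < 1 by case/andP=> /ltW ->.
apply: (sigma_limits m_deriv m1_deriv _ _ m0 _ _ m_inv A_cvg B_cvg lam0).
- by move=> x /open01; exact: m1_gt0.
- by move=> x /open01; exact: m2_gt0.
- by move=> y /g_inv[].
- by move=> y /g_inv[].
- by apply: filterS sigma_def => t [/andP[s0 _] sigma_t _].
Qed.
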